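(* Let $u$ be a smooth solution of the equivariant Skyrme equation in $\Omega$ with $u(t,0)=0$. Then \[ \lim_{T\to0^+}\int_0^T\frac{\sin^2u(T,r)}{2r^2}\,r\,dr=0. \]
   Context: Fix $\alpha>0$, $T_0>0$. The equivariant Skyrme equation is \[ \Big(1+\tfrac{\alpha^2\sin^2u}{r^2}\Big)(u_{tt}-u_{rr}) - \Big(1-\tfrac{\alpha^2\sin^2u}{r^2}\Big)\tfrac{u_r}{r} + \tfrac{\sin 2u}{2r^2}\big[\alpha^2(u_t^2-u_r^2)+1\big]=0. \] $\Omega=\{(t,r):0<t\le T_0,\ 0\le r\le t\}$; a smooth solution in $\Omega$ is a smooth function on $\Omega$ satisfying the equation for $r>0$. *)

From Stdlib Require Import Reals Lra.
Open Scope R_scope.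

Definition in_Omega (T0 t r : R) : Prop := 0 < t <= T0 /\ 0 <= r <= t.

Definition open2 (U : R -> R -> Prop) : Prop :=
  forall t r, U t r -> exists e, 0 < e /\
    forall t' r', Rabs (t' - t) < e -> Rabs (r' - r) < e -> U t' r'.

Definition cont2_on (U : R -> R -> Prop) (f : R -> R -> R) : Prop :=
  forall t r, U t r -> forall eps, 0 < eps -> exists d, 0 < d /\
    forall t' r', Rabs (t' - t) < d -> Rabs (r' - r) < d ->
      Rabs (f t' r' - f t r) < eps.

Definition dt_on (U : R -> R -> Prop) (f g : R -> R -> R) : Prop :=
  forall t r, U t r -> derivable_pt_lim (fun s => f s r) t (g t r).
Definition dr_on (U : R -> R -> Prop) (f g : R -> R -> R) : Prop :=
  forall t r, U t r -> derivable_pt_lim (fun s => f t s) r (g t r).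

Fixpoint Ck (k : nat) (U : R -> R -> Prop) (f : R -> R -> R) : Prop :=
  match k with
  | O => cont2_on U f
  | S k => cont2_on U f /\ exists ft fr : R -> R -> R,
            dt_on U f ft /\ dr_on U f fr /\ Ck k U ft /\ Ck k U fr
  end.

Definition smooth_on (U : R -> R -> Prop) (f : R -> R -> R) : Prop :=
  forall k, Ck k U f.

Definition skyrme_eq (alpha : R) (u ut ur utt urr : R -> R -> R) (t r : R) : Prop :=
  (1 + alpha ^ 2 * (sin (u t r)) ^ 2 / r ^ 2) * (utt t r - urr t r)
  - (1 - alpha ^ 2 * (sin (u t r)) ^ 2 / r ^ 2) * (ur t r / r)
  + sin (2 * u t r) / (2 * r ^ 2) * (alpha ^ 2 * ((ut t r) ^ 2 - (ur t r) ^ 2) + 1) = 0.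

Definition energy_density (u : R -> R -> R) (T : R) : R -> R :=
  fun r => (sin (u T r)) ^ 2 / (2 * r ^ 2) * r.

From Stdlib Require Import Reals Lra Psatz Classical ClassicalEpsilon.
From Coquelicot Require Import Coquelicot.
Open Scope R_scope.

(* Proof idea (energy method in the backward light cone).
   For a C^2 solution, the energy density (times r)
     e = (r + a^2 sin^2 u / r)(u_t^2 + u_r^2)/2 + sin^2 u / (2 r)
   satisfies the local conservation law [e_t = flux_r] with flux [(r + a^2 sin^2 u/r) u_t u_r].
   Integrating over the truncated cone [e <= r <= tau], the flux leaving through the light
   cone [r = tau] has the good sign and the flux through the small circle [r = e] is O(e),
   because [u(t,0) = 0] makes [sin u = O(r)].  Hence the energy at time T is bounded by
   the energy at time T0, uniformly in T.  Since [2 sin u cos u u_r <= (2 r / a^2) e + x/r]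
   pointwise, integrating along a radius gives [sin^2 u(T, r) <= K r], so the integrand
   [sin^2 u / (2 r)] is bounded by [K/2] and its integral over [0, T] is O(T). *)

(** * Two-variable calculus on an open set *)

Lemma cont2_on_pt U f t r : cont2_on U f -> U t r -> continuity_2d_pt f t r.
Proof.
  intros Hf Hu eps. destruct (Hf t r Hu eps (cond_pos eps)) as [d [dp Hd]].
  exists (mkposreal d dp). intros t' r' Ht Hr. now apply Hd.
Qed.

Lemma continuity_pt_of_continuous f x : continuous f x -> continuity_pt f x.
Proof. apply continuity_pt_filterlim. Qed.

Lemma continuity_2d_pt_snd f t r : continuity_2d_pt f t r -> continuous (fun z => f t z) r.
Proof.
  intros Hf. apply filterlim_locally. intros eps. destruct (Hf eps) as [d Hd].
  exists d. intros z Hz. apply Hd; [rewrite Rminus_diag, Rabs_R0; apply cond_pos | exact Hz].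
Qed.

Lemma is_derive_dt U f g t r : dt_on U f g -> U t r -> is_derive (fun z => f z r) t (g t r).
Proof. intros H Hu. apply is_derive_Reals. now apply H. Qed.

Lemma is_derive_dr U f g t r : dr_on U f g -> U t r -> is_derive (fun z => f t z) r (g t r).
Proof. intros H Hu. apply is_derive_Reals. now apply H. Qed.

Lemma open2_locally_2d U (P : R -> R -> Prop) t r : open2 U -> U t r ->
  (forall t' r', U t' r' -> P t' r') -> locally_2d P t r.
Proof.
  intros HO Hu HP. destruct (HO t r Hu) as [e [ep He]].
  exists (mkposreal e ep). intros t' r' Ht Hr. now apply HP, He.
Qed.

Lemma open2_locally_t U (P : R -> R -> Prop) t r : open2 U -> U t r ->
  (forall t' r', U t' r' -> P t' r') -> locally t (fun z => P z r).
Proof.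
  intros HO Hu HP. destruct (HO t r Hu) as [e [ep He]].
  exists (mkposreal e ep). intros z Hz. apply HP, He; [exact Hz | rewrite Rminus_diag, Rabs_R0; exact ep].
Qed.

Lemma open2_locally_r U (P : R -> R -> Prop) t r : open2 U -> U t r ->
  (forall t' r', U t' r' -> P t' r') -> locally r (fun z => P t z).
Proof.
  intros HO Hu HP. destruct (HO t r Hu) as [e [ep He]].
  exists (mkposreal e ep). intros z Hz. apply HP, He; [rewrite Rminus_diag, Rabs_R0; exact ep | exact Hz].
Qed.

Lemma cont2_on_ext U f g : open2 U -> (forall t r, U t r -> f t r = g t r) ->
  cont2_on U f -> cont2_on U g.
Proof.
  intros HO Hfg Hf t r Hu eps heps.
  destruct (HO t r Hu) as [e [ep He]]. destruct (Hf t r Hu eps heps) as [d [dp Hd]].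
  exists (Rmin d e). split; [now apply Rmin_pos|]. intros t' r' Ht Hr.
  assert (Ht1 := Rlt_le_trans _ _ _ Ht (Rmin_l d e)). assert (Ht2 := Rlt_le_trans _ _ _ Ht (Rmin_r d e)).
  assert (Hr1 := Rlt_le_trans _ _ _ Hr (Rmin_l d e)). assert (Hr2 := Rlt_le_trans _ _ _ Hr (Rmin_r d e)).
  rewrite <- (Hfg t r Hu), <- (Hfg t' r' (He t' r' Ht2 Hr2)). now apply Hd.
Qed.

Lemma dt_on_ext U f g h : open2 U -> (forall t r, U t r -> f t r = g t r) ->
  dt_on U f h -> dt_on U g h.
Proof.
  intros HO Hfg Hf t r Hu. apply is_derive_Reals.
  apply (is_derive_ext_loc (fun z => f z r)); [|now apply is_derive_dt with U].
  now apply (open2_locally_t U (fun z s => f z s = g z s)).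
Qed.

Lemma dr_on_ext U f g h : open2 U -> (forall t r, U t r -> f t r = g t r) ->
  dr_on U f h -> dr_on U g h.
Proof.
  intros HO Hfg Hf t r Hu. apply is_derive_Reals.
  apply (is_derive_ext_loc (fun z => f t z)); [|now apply is_derive_dr with U].
  now apply (open2_locally_r U (fun z s => f z s = g z s)).
Qed.

Lemma mixed_partials_commute U u ut ur utr urt t r : open2 U ->
  dt_on U u ut -> dr_on U u ur -> dr_on U ut utr -> dt_on U ur urt ->
  cont2_on U utr -> cont2_on U urt -> U t r -> utr t r = urt t r.
Proof.
  intros HO Dut Dur Dutr Durt Cutr Curt Hu.
  assert (Eur : forall t' r', U t' r' -> Derive (fun s => u t' s) r' = ur t' r')
    by (intros; apply is_derive_unique; now apply is_derive_dr with U).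
  assert (Eut : forall t' r', U t' r' -> Derive (fun s => u s r') t' = ut t' r')
    by (intros; apply is_derive_unique; now apply is_derive_dt with U).
  assert (Drt : forall t' r', U t' r' ->
    is_derive (fun z => Derive (fun s => u z s) r') t' (urt t' r')).
  { intros t' r' Hu'. apply (is_derive_ext_loc (fun z => ur z r')); [|now apply is_derive_dt with U].
    apply (open2_locally_t U (fun z s => ur z s = Derive (fun s' => u z s') s)); auto.
    intros; symmetry; now apply Eur. }
  assert (Dtr : forall t' r', U t' r' ->
    is_derive (fun z => Derive (fun s => u s z) t') r' (utr t' r')).
  { intros t' r' Hu'. apply (is_derive_ext_loc (fun z => ut t' z)); [|now apply is_derive_dr with U].
    apply (open2_locally_r U (fun z s => ut z s = Derive (fun s' => u s' s) z)); auto.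
    intros; symmetry; now apply Eut. }
  rewrite <- (is_derive_unique _ _ _ (Drt t r Hu)), <- (is_derive_unique _ _ _ (Dtr t r Hu)).
  symmetry. apply Schwarz.
  - apply (open2_locally_2d U); auto. intros t' r' Hu'.
    split; [|split; [|split]]; eexists.
    + exact (is_derive_dt U _ _ _ _ Dut Hu').
    + exact (is_derive_dr U _ _ _ _ Dur Hu').
    + now apply Drt.
    + now apply Dtr.
  - apply (continuity_2d_pt_ext_loc urt); [|now apply cont2_on_pt with U].
    apply (open2_locally_2d U); auto. intros t' r' Hu'. symmetry. now apply is_derive_unique, Drt.
  - apply (continuity_2d_pt_ext_loc utr); [|now apply cont2_on_pt with U].
    apply (open2_locally_2d U); auto. intros t' r' Hu'. symmetry. now apply is_derive_unique, Dtr.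
Qed.

(** * Compactness and one-variable estimates *)

Lemma stepwise_bound (g : R -> R) a b d : 0 < d ->
  (forall x x', a <= x <= b -> a <= x' <= b -> Rabs (x - x') < d -> Rabs (g x - g x') < 1) ->
  forall (n : nat) x, a <= x <= b -> x <= a + INR n * (d/2) -> Rabs (g x) <= Rabs (g a) + INR n.
Proof.
  intros dp Hg n. induction n as [|n IH]; intros x Hx Hxn.
  - simpl in *. replace x with a by lra. lra.
  - rewrite S_INR in *. destruct (Rle_dec x (a + INR n * (d/2))) as [h|h].
    + specialize (IH x Hx h). lra.
    + assert (Hn : 0 <= INR n) by apply pos_INR.
      set (x' := a + INR n * (d/2)).
      assert (Hx' : a <= x' <= b) by (unfold x'; split; nra).
      specialize (IH x' Hx' (Rle_refl _)).
      assert (Hxx' : Rabs (x - x') < d) by (unfold x' in *; rewrite Rabs_right; nra).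
      specialize (Hg x x' Hx Hx' Hxx').
      assert (Rabs (g x) <= Rabs (g x') + Rabs (g x - g x')).
      { replace (g x) with (g x' + (g x - g x')) at 1 by ring. apply Rabs_triang. }
      lra.
Qed.

Lemma rectangle_bound f a b c d : a <= b -> c <= d ->
  (forall x y, a <= x <= b -> c <= y <= d -> continuity_2d_pt f x y) ->
  exists M, forall x y, a <= x <= b -> c <= y <= d -> Rabs (f x y) <= M.
Proof.
  intros hab hcd Hc.
  destruct (uniform_continuity_2d f a b c d Hc (mkposreal 1 Rlt_0_1)) as [del Hd]. simpl in Hd.
  assert (Hdp := cond_pos del).
  destruct (INR_unbounded ((b - a + (d - c)) / (del/2))) as [n Hn].
  assert (HnL : b - a + (d - c) <= INR n * (del/2)).
  { apply Rlt_le. apply (Rmult_lt_compat_r (del/2)) in Hn; [|lra].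
    unfold Rdiv in Hn at 1. rewrite Rmult_assoc, Rinv_l in Hn by lra. lra. }
  assert (Hn0 : 0 <= INR n) by apply pos_INR.
  exists (Rabs (f a c) + INR n + INR n). intros x y Hx Hy.
  assert (Hvert : Rabs (f x y) <= Rabs (f x c) + INR n).
  { apply (stepwise_bound (fun y => f x y) c d del Hdp); [|exact Hy|lra].
    intros y1 y2 Hy1 Hy2 Hyy. apply (Hd x y2 x y1 Hx Hy2 Hx Hy1); [|exact Hyy].
    rewrite Rminus_diag, Rabs_R0. exact Hdp. }
  assert (Hhor : Rabs (f x c) <= Rabs (f a c) + INR n).
  { apply (stepwise_bound (fun t => f t c) a b del Hdp); [|exact Hx|lra].
    intros x1 x2 Hx1 Hx2 Hxx.
    apply (Hd x2 c x1 c Hx2 (conj (Rle_refl c) hcd) Hx1 (conj (Rle_refl c) hcd)); [exact Hxx|].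
    rewrite Rminus_diag, Rabs_R0. exact Hdp. }
  lra.
Qed.

Lemma open2_strip U t0 c d : open2 U -> c <= d -> (forall r, c <= r <= d -> U t0 r) ->
  exists del, 0 < del /\ forall t r, Rabs (t - t0) < del -> c - del < r < d + del -> U t r.
Proof.
  intros HO hcd HU.
  assert (H : forall r, exists e, 0 < e /\ (c <= r <= d ->
     forall t' r', Rabs (t' - t0) < e -> Rabs (r' - r) < e -> U t' r')).
  { intros r. destruct (classic (c <= r <= d)) as [h|h].
    - destruct (HO t0 r (HU r h)) as [e [ep He]]. exists e. split; auto.
    - exists 1. split; [lra | intros h'; contradiction]. }
  set (f := fun r => proj1_sig (constructive_indefinite_description _ (H r))).
  assert (Hf : forall r, 0 < f r /\ (c <= r <= d ->
     forall t' r', Rabs (t' - t0) < f r -> Rabs (r' - r) < f r -> U t' r')).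
  { intros r. unfold f. now destruct (constructive_indefinite_description _ (H r)). }
  assert (hp : forall r, 0 < f r / 2) by (intros r; destruct (Hf r); lra).
  (* Lebesgue number of the cover by half-radius boxes *)
  destruct (compactness_value_1d c d (fun r => mkposreal _ (hp r))) as [dd Hdd]. simpl in Hdd.
  exists dd. split; [apply cond_pos|]. intros t r Ht Hr.
  set (x := Rmax c (Rmin r d)).
  assert (Hx : c <= x <= d) by (unfold x; split; [apply Rmax_l | apply Rmax_lub; [lra | apply Rmin_r]]).
  assert (Hrx : Rabs (r - x) < dd).
  { assert (0 < dd) by apply cond_pos. unfold x.
    destruct (Rle_dec r d) as [h1|h1].
    - rewrite Rmin_left by lra. destruct (Rle_dec c r) as [h2|h2].
      + rewrite Rmax_right, Rminus_diag, Rabs_R0 by lra. lra.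
      + rewrite Rmax_left by lra. apply Rabs_def1; lra.
    - rewrite Rmin_right, Rmax_right by lra. apply Rabs_def1; lra. }
  apply NNPP. intros HN. apply (Hdd x Hx). intros [s [Hs [Hxs Hds]]].
  apply HN. destruct (Hf s) as [fs Hbox]. apply (Hbox Hs); [lra|].
  assert (Rabs (r - s) <= Rabs (r - x) + Rabs (x - s)).
  { replace (r - s) with ((r - x) + (x - s)) by ring. apply Rabs_triang. }
  lra.
Qed.

Lemma mean_value_bound (g dg : R -> R) e M : 0 <= e ->
  (forall x, 0 <= x <= e -> is_derive g x (dg x)) ->
  (forall x, 0 <= x <= e -> Rabs (dg x) <= M) -> Rabs (g e - g 0) <= M * e.
Proof.
  intros he Hd Hb.
  destruct (MVT_gen g 0 e dg) as [c [Hc Heq]].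
  - intros x Hx. rewrite Rmin_left, Rmax_right in Hx by lra. apply Hd. lra.
  - intros x Hx. rewrite Rmin_left, Rmax_right in Hx by lra. apply continuity_pt_of_continuous.
    apply (@ex_derive_continuous R_AbsRing R_NormedModule). eexists. apply Hd. lra.
  - rewrite Rmin_left, Rmax_right in Hc by lra.
    rewrite Heq, Rminus_0_r, Rabs_mult, (Rabs_right e) by lra.
    apply Rmult_le_compat_r; [lra | now apply Hb].
Qed.

Lemma le_of_le_plus_small x y r B : 0 < r -> 0 <= B ->
  (forall e, 0 < e < r -> x <= y + e * B) -> x <= y.
Proof.
  intros hr hB H. apply Rnot_lt_le. intros Hyx.
  set (e := Rmin (r/2) ((x - y)/(2*(B+1)))).
  assert (he : 0 < e) by (apply Rmin_pos; [lra | apply Rdiv_lt_0_compat; lra]).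
  assert (he1 : e <= r/2) by apply Rmin_l.
  assert (he2 : e * (2*(B+1)) <= x - y).
  { replace (x - y) with ((x - y)/(2*(B+1)) * (2*(B+1))) by (field; lra).
    apply Rmult_le_compat_r; [lra | apply Rmin_r]. }
  specialize (H e ltac:(lra)). nra.
Qed.

Lemma RiemannInt_bounded f T C (pr : Riemann_integrable f 0 T) : 0 <= T ->
  (forall x, 0 < x < T -> 0 <= f x <= C) -> 0 <= RiemannInt pr <= C * T.
Proof.
  intros HT Hf. split.
  - pose proof (RiemannInt_P15 (RiemannInt_P14 0 T 0)) as E. rewrite Rmult_0_l in E.
    assert (RiemannInt (RiemannInt_P14 0 T 0) <= RiemannInt pr); [|lra].
    apply RiemannInt_P19; [exact HT|]. intros x Hx. apply Hf, Hx.
  - pose proof (RiemannInt_P15 (RiemannInt_P14 0 T C)) as E. rewrite Rminus_0_r in E.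
    assert (RiemannInt pr <= RiemannInt (RiemannInt_P14 0 T C)); [|lra].
    apply RiemannInt_P19; [exact HT|]. intros x Hx. apply Hf, Hx.
Qed.

(** * The energy identity of the Skyrme equation *)

(* Energy density (times [r]) [e = (r + a^2 sin^2 u / r)(u_t^2 + u_r^2)/2 + sin^2 u / (2r)],
   its time derivative [e_t], the flux [(r + a^2 sin^2 u / r) u_t u_r] and its radial
   derivative; the equation makes [e_t = flux_r]. *)
Definition skyrme_energy a (u ut ur : R -> R -> R) t r :=
  (r + a*a*sin (u t r)*sin (u t r)* /r) * (ut t r*ut t r + ur t r*ur t r) * /2
  + sin (u t r)*sin (u t r)* /2 * /r.

Definition skyrme_energy_t a (u ut ur utt urt : R -> R -> R) t r :=
  (a*a*(2*sin (u t r)*cos (u t r)*ut t r) * /r) * (ut t r*ut t r + ur t r*ur t r) * /2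
  + (r + a*a*sin (u t r)*sin (u t r)* /r) * (ut t r*utt t r + ur t r*urt t r)
  + sin (u t r)*cos (u t r)*ut t r * /r.

Definition skyrme_flux a (u ut ur : R -> R -> R) t r :=
  (r + a*a*sin (u t r)*sin (u t r)* /r) * ut t r * ur t r.

Definition skyrme_flux_r a (u ut ur utr urr : R -> R -> R) t r :=
  (1 + a*a*(2*sin (u t r)*cos (u t r)*ur t r) * /r - a*a*sin (u t r)*sin (u t r)* /r * /r)
    * ut t r * ur t r
  + (r + a*a*sin (u t r)*sin (u t r)* /r) * (utr t r * ur t r + ut t r * urr t r).

Lemma energy_t_minus_flux_r a u ut ur utt urt urr t r : r <> 0 ->
  skyrme_energy_t a u ut ur utt urt t r - skyrme_flux_r a u ut ur urt urr t r =
  r * ut t r * ((1 + a ^ 2 * sin (u t r) ^ 2 / r ^ 2) * (utt t r - urr t r)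
    - (1 - a ^ 2 * sin (u t r) ^ 2 / r ^ 2) * (ur t r / r)
    + sin (2 * u t r) / (2 * r ^ 2) * (a ^ 2 * (ut t r ^ 2 - ur t r ^ 2) + 1)).
Proof.
  intros Hr. unfold skyrme_energy_t, skyrme_flux_r. rewrite sin_2a. field. exact Hr.
Qed.

Lemma skyrme_energy_nonneg a u ut ur t x : 0 < x -> 0 <= skyrme_energy a u ut ur t x.
Proof.
  intros hx. unfold skyrme_energy. assert (0 < /x) by (apply Rinv_0_lt_compat; lra).
  set (s := sin (u t x)).
  assert (0 <= s*s) by apply Rle_0_sqr. assert (0 <= a*a) by apply Rle_0_sqr.
  assert (0 <= a*a*s*s*/x) by (replace (a*a*s*s*/x) with ((a*a)*(s*s)*/x) by ring;
    apply Rmult_le_pos; [apply Rmult_le_pos|]; lra).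
  assert (0 <= ut t x*ut t x + ur t x*ur t x)
    by (pose proof (Rle_0_sqr (ut t x)); pose proof (Rle_0_sqr (ur t x)); unfold Rsqr in *; lra).
  assert (0 <= s*s*/2*/x) by (apply Rmult_le_pos; [apply Rmult_le_pos; lra | lra]).
  assert (0 <= (x + a*a*s*s*/x) * (ut t x*ut t x + ur t x*ur t x)) by (apply Rmult_le_pos; lra).
  nra.
Qed.

(* On the light cone [r = t] the outgoing flux plus the energy density is nonnegative:
   the energy inside the backward cone can only decrease towards the tip. *)
Lemma flux_plus_energy_nonneg a u ut ur x : 0 < x ->
  0 <= skyrme_flux a u ut ur x x + skyrme_energy a u ut ur x x.
Proof.
  intros hx. unfold skyrme_flux, skyrme_energy.
  set (s := sin (u x x)). set (p := ut x x). set (q := ur x x).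
  assert (0 < /x) by (apply Rinv_0_lt_compat; lra).
  assert (HP : 0 <= x + a*a*s*s*/x).
  { assert (0 <= a*a*s*s) by (replace (a*a*s*s) with ((a*s)*(a*s)) by ring; apply Rle_0_sqr). nra. }
  assert (0 <= s*s) by apply Rle_0_sqr.
  assert (0 <= (x + a*a*s*s*/x) * ((p+q)*(p+q))) by (apply Rmult_le_pos; [lra | apply Rle_0_sqr]).
  nra.
Qed.

(* The pointwise inequality behind [sin^2 u(T, r) <= K r]: the radial derivative of
   [sin^2 u] is controlled by the energy density, for every weight [r > 0]. *)
Lemma sin_sq_deriv_le_energy a u ut ur t x r : 0 < a -> 0 < x -> 0 < r ->
  2*sin (u t x)*cos (u t x)*ur t x <= r*(2/(a*a))*skyrme_energy a u ut ur t x + x/r.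
Proof.
  intros ha hx hr. unfold skyrme_energy.
  set (s := sin (u t x)). set (cs := cos (u t x)). set (p := ut t x). set (f := ur t x).
  assert (0 < /x) by (apply Rinv_0_lt_compat; lra).
  assert (0 <= s*s) by apply Rle_0_sqr.
  assert (h1 : r*(2/(a*a))*((x + a*a*s*s*/x)*(p*p+f*f)*/2 + s*s*/2*/x)
     = r*s*s*f*f/x + r/(a*a)*(x*(p*p) + x*(f*f) + a*a*s*s*/x*(p*p) + s*s*/x))
    by (field; lra).
  assert (h2 : 0 <= r/(a*a)*(x*(p*p) + x*(f*f) + a*a*s*s*/x*(p*p) + s*s*/x)).
  { apply Rmult_le_pos; [apply Rmult_le_pos; [lra | left; apply Rinv_0_lt_compat; nra]|].
    assert (0 <= p*p) by apply Rle_0_sqr. assert (0 <= f*f) by apply Rle_0_sqr.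
    assert (0 <= s*s*/x) by (apply Rmult_le_pos; lra).
    assert (0 <= a*a*s*s*/x*(p*p)) by (replace (a*a*s*s*/x*(p*p)) with ((a*a)*(s*s*/x)*(p*p)) by ring;
      apply Rmult_le_pos; [apply Rmult_le_pos|]; nra).
    nra. }
  assert (hc : cs*cs <= 1) by (pose proof (sin2_cos2 (u t x)); unfold Rsqr in *; fold s cs in H1; nra).
  (* AM-GM: [2 s c f <= r s^2 f^2 / x + x / r] *)
  assert (h3 : r*s*s*f*f/x + x/r - 2*s*cs*f
     = ((r*(s*f) - x*cs)*(r*(s*f) - x*cs) + x*x*(1 - cs*cs))/(r*x)) by (field; lra).
  assert (h4 : 0 <= ((r*(s*f) - x*cs)*(r*(s*f) - x*cs) + x*x*(1 - cs*cs))/(r*x)).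
  { apply Rmult_le_pos; [|left; apply Rinv_0_lt_compat; nra].
    pose proof (Rle_0_sqr (r*(s*f) - x*cs)). pose proof (Rle_0_sqr x). unfold Rsqr in *. nra. }
  unfold Rdiv in *. nra.
Qed.

Lemma sq_div_bound s M x : 0 < x -> Rabs s <= M * x -> 0 <= s*s*/x <= M*M*x.
Proof.
  intros hx hs. assert (Hie : 0 < /x) by (apply Rinv_0_lt_compat; lra).
  assert (Hs2 : s*s <= (M*x)*(M*x)).
  { replace (s*s) with (Rabs s * Rabs s) by (pose proof (Rsqr_abs s); unfold Rsqr in *; lra).
    apply Rmult_le_compat; auto using Rabs_pos. }
  split; [apply Rmult_le_pos; [apply Rle_0_sqr | lra]|].
  replace (M*M*x) with ((M*x)*(M*x)*/x) by (field; lra). apply Rmult_le_compat_r; lra.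
Qed.

(* If [g(0) = 0] and [g] is differentiable at [0], then [g(r)^2 / (2 r^2) * r] (undefined
   only at [r = 0], where Rocq's division gives [0]) is continuous at [0]. *)
Lemma continuity_sq_over_r_at_0 (g : R -> R) L : g 0 = 0 -> derivable_pt_lim g 0 L ->
  continuity_pt (fun r => g r ^ 2 / (2 * r ^ 2) * r) 0.
Proof.
  intros H0 HL eps ep.
  destruct (HL 1 Rlt_0_1) as [d Hd].
  set (C := Rabs L + 1).
  assert (HC : 0 < C) by (unfold C; pose proof (Rabs_pos L); lra).
  exists (Rmin d (eps/(C*C))). split.
  { apply Rmin_pos; [apply cond_pos | apply Rdiv_lt_0_compat; nra]. }
  intros x [[_ Hx0] Hx]. simpl in *. unfold R_dist in *. rewrite Rminus_0_r in Hx.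
  assert (Hxd : Rabs x < d) by (eapply Rlt_le_trans; [exact Hx | apply Rmin_l]).
  assert (Hxe : Rabs x < eps/(C*C)) by (eapply Rlt_le_trans; [exact Hx | apply Rmin_r]).
  specialize (Hd x (not_eq_sym Hx0) Hxd). rewrite Rplus_0_l, H0, Rminus_0_r in Hd.
  (* the difference quotient [q = g(x)/x] stays bounded by [C] *)
  set (q := g x / x) in *.
  assert (Hq : Rabs q < C).
  { unfold C. assert (Rabs q <= Rabs (q - L) + Rabs L)
      by (replace q with ((q - L) + L) at 1 by ring; apply Rabs_triang). lra. }
  match goal with |- Rabs ?E < _ =>
    replace E with (q*q*x/2) by (unfold q; rewrite Rmult_0_r; field; auto) end.
  assert (Eq : Rabs q * Rabs q = q*q) by (pose proof (Rsqr_abs q); unfold Rsqr in *; lra).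
  assert (Hq2 : q*q <= C*C) by (rewrite <- Eq; pose proof (Rabs_pos q); apply Rmult_le_compat; lra).
  unfold Rdiv. rewrite !Rabs_mult, Eq, (Rabs_right (/2)) by lra.
  assert (Rabs x * (C*C) < eps).
  { apply (Rmult_lt_compat_r (C*C)) in Hxe; [|nra].
    unfold Rdiv in Hxe. rewrite Rmult_assoc, Rinv_l in Hxe by nra. lra. }
  pose proof (Rabs_pos x). pose proof (Rle_0_sqr q). unfold Rsqr in *. nra.
Qed.

Ltac solve_cont2 := repeat first
  [ apply continuity_2d_pt_plus | apply continuity_2d_pt_opp | apply continuity_2d_pt_minus
  | apply continuity_2d_pt_mult | apply continuity_2d_pt_const
  | apply continuity_2d_pt_id1 | apply continuity_2d_pt_id2
  | apply (continuity_1d_2d_pt_comp sin); [apply continuity_sin|]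
  | apply (continuity_1d_2d_pt_comp cos); [apply continuity_cos|]
  | (apply continuity_2d_pt_inv; [| first [assumption | cbv beta; lra]])
  | assumption ].

(** * Energy estimates for a C^2 solution in the backward cone *)

Section RegularSolution.

Variables (a T0 : R) (u ut ur utt utr urt urr : R -> R -> R) (U : R -> R -> Prop).
Hypothesis Ha : 0 < a.
Hypothesis HT0 : 0 < T0.
Hypothesis HO : open2 U.
Hypothesis HOm : forall t r, in_Omega T0 t r -> U t r.
Hypotheses (Cu : cont2_on U u) (Cut : cont2_on U ut) (Cur : cont2_on U ur)
  (Cutt : cont2_on U utt) (Cutr : cont2_on U utr) (Curt : cont2_on U urt) (Curr : cont2_on U urr).
Hypotheses (Dut : dt_on U u ut) (Dur : dr_on U u ur) (Dutt : dt_on U ut utt)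
  (Dutr : dr_on U ut utr) (Durt : dt_on U ur urt) (Durr : dr_on U ur urr).
Hypothesis Heq : forall t r, in_Omega T0 t r -> 0 < r -> skyrme_eq a u ut ur utt urr t r.
Hypothesis Hbd : forall t, 0 < t <= T0 -> u t 0 = 0.

Let ed := skyrme_energy a u ut ur.
Let et := skyrme_energy_t a u ut ur utt urt.
Let flux := skyrme_flux a u ut ur.
Let flux_r := skyrme_flux_r a u ut ur utr urr.

Lemma cone_in_U t r : 0 < t <= T0 -> 0 <= r <= t -> U t r.
Proof. intros Ht Hr. apply HOm. now split. Qed.

Ltac cont2_at Hu :=
  pose proof (cont2_on_pt _ _ _ _ Cu Hu); pose proof (cont2_on_pt _ _ _ _ Cut Hu);
  pose proof (cont2_on_pt _ _ _ _ Cur Hu); pose proof (cont2_on_pt _ _ _ _ Cutt Hu);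
  pose proof (cont2_on_pt _ _ _ _ Cutr Hu); pose proof (cont2_on_pt _ _ _ _ Curt Hu);
  pose proof (cont2_on_pt _ _ _ _ Curr Hu).

Lemma energy_cont t r : U t r -> r <> 0 -> continuity_2d_pt ed t r.
Proof. intros Hu Hr. cont2_at Hu. unfold ed, skyrme_energy. solve_cont2. Qed.

Lemma energy_t_cont t r : U t r -> r <> 0 -> continuity_2d_pt et t r.
Proof. intros Hu Hr. cont2_at Hu. unfold et, skyrme_energy_t. solve_cont2. Qed.

Lemma flux_r_cont t r : U t r -> r <> 0 -> continuity_2d_pt flux_r t r.
Proof. intros Hu Hr. cont2_at Hu. unfold flux_r, skyrme_flux_r. solve_cont2. Qed.

Lemma energy_deriv_t t r : U t r -> r <> 0 -> is_derive (fun z => ed z r) t (et t r).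
Proof.
  intros Hu Hr.
  pose proof (is_derive_dt _ _ _ t r Dut Hu) as D1.
  pose proof (is_derive_dt _ _ _ t r Dutt Hu) as D2.
  pose proof (is_derive_dt _ _ _ t r Durt Hu) as D3.
  unfold ed, skyrme_energy. auto_derive.
  - repeat split; eexists; eassumption.
  - rewrite (is_derive_unique (fun z : R => u z r) _ _ D1),
      (is_derive_unique (fun z : R => ut z r) _ _ D2), (is_derive_unique (fun z : R => ur z r) _ _ D3).
    unfold et, skyrme_energy_t. field. exact Hr.
Qed.

Lemma flux_deriv_r t r : U t r -> r <> 0 -> is_derive (fun z => flux t z) r (flux_r t r).
Proof.
  intros Hu Hr.
  pose proof (is_derive_dr _ _ _ t r Dur Hu) as D1.
  pose proof (is_derive_dr _ _ _ t r Dutr Hu) as D2.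
  pose proof (is_derive_dr _ _ _ t r Durr Hu) as D3.
  unfold flux, skyrme_flux. auto_derive.
  - repeat split; try (eexists; eassumption); assumption.
  - rewrite (is_derive_unique (fun z : R => u t z) _ _ D1),
      (is_derive_unique (fun z : R => ut t z) _ _ D2), (is_derive_unique (fun z : R => ur t z) _ _ D3).
    unfold flux_r, skyrme_flux_r. field. exact Hr.
Qed.

Lemma conservation_law t r : in_Omega T0 t r -> 0 < r -> et t r = flux_r t r.
Proof.
  intros Ho Hr.
  assert (Hsym : utr t r = urt t r)
    by (apply (mixed_partials_commute U u ut ur); auto).
  unfold flux_r, skyrme_flux_r. rewrite Hsym. fold (skyrme_flux_r a u ut ur urt urr t r).
  apply Rminus_diag_uniq. unfold et. rewrite energy_t_minus_flux_r by lra.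
  specialize (Heq t r Ho Hr). unfold skyrme_eq in Heq. rewrite Heq. ring.
Qed.

Lemma sin_u_deriv_r t r : U t r -> is_derive (fun z => sin (u t z)) r (cos (u t r) * ur t r).
Proof.
  intros Hu. pose proof (is_derive_dr _ _ _ t r Dur Hu) as D1.
  auto_derive; [eexists; exact D1|].
  rewrite (is_derive_unique (fun z : R => u t z) _ _ D1). ring.
Qed.

(* Because [u(t, 0) = 0], a bound on [u_r] near the axis makes [sin u] linearly small. *)
Lemma sin_u_le_linear tau e M : 0 < tau <= T0 -> 0 <= e <= tau ->
  (forall y, 0 <= y <= e -> Rabs (ur tau y) <= M) -> Rabs (sin (u tau e)) <= M * e.
Proof.
  intros Ht He Hb.
  assert (E0 : sin (u tau 0) = 0) by (rewrite Hbd by exact Ht; apply sin_0).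
  replace (sin (u tau e)) with (sin (u tau e) - sin (u tau 0)) by (rewrite E0; ring).
  apply (mean_value_bound (fun z => sin (u tau z)) (fun z => cos (u tau z) * ur tau z)); [lra| |].
  - intros x Hx. apply sin_u_deriv_r, cone_in_U; lra.
  - intros x Hx. rewrite Rabs_mult. specialize (Hb x Hx).
    assert (Rabs (cos (u tau x)) <= 1) by (apply Rabs_le; apply COS_bound).
    pose proof (Rabs_pos (ur tau x)). pose proof (Rabs_pos (cos (u tau x))). nra.
Qed.

Lemma flux_small_near_axis x e M : 0 < x <= T0 -> 0 < e <= x ->
  (forall y, 0 <= y <= e -> Rabs (ur x y) <= M) -> Rabs (ut x e) <= M ->
  Rabs (flux x e) <= e*(1+a*a*M*M)*M*M.
Proof.
  intros Hx He Hb Hft.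
  pose proof (sin_u_le_linear x e M Hx ltac:(lra) Hb) as Hs.
  pose proof (Hb e ltac:(lra)) as Hfr.
  assert (HM : 0 <= M) by (eapply Rle_trans; [apply Rabs_pos | exact Hft]).
  destruct (sq_div_bound (sin (u x e)) M e ltac:(lra) Hs) as [Hq0 Hq].
  unfold flux, skyrme_flux. set (s := sin (u x e)) in *.
  set (P := e + a*a*s*s*/e).
  assert (Haa : 0 <= a*a) by apply Rle_0_sqr.
  replace (a*a*s*s*/e) with ((a*a)*(s*s*/e)) in P by ring.
  assert (HP0 : 0 <= P) by (unfold P; nra).
  assert (HP1 : P <= e*(1+a*a*M*M)) by (unfold P; nra).
  rewrite !Rabs_mult, (Rabs_right P) by lra.
  pose proof (Rabs_pos (ut x e)). pose proof (Rabs_pos (ur x e)).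
  assert (P * Rabs (ut x e) <= e*(1+a*a*M*M) * M) by (apply Rmult_le_compat; lra).
  assert (0 <= P * Rabs (ut x e)) by (apply Rmult_le_pos; lra).
  apply Rmult_le_compat; lra.
Qed.

Lemma strip_around_segment e tau : 0 < e < tau -> tau <= T0 ->
  exists d, 0 < d /\ forall x r, Rabs (x - tau) < d -> e - d < r < tau + d -> U x r /\ r <> 0.
Proof.
  intros He Ht.
  destruct (open2_strip U tau e tau HO ltac:(lra)) as [d0 [d0p Hd0]].
  { intros r Hr. apply cone_in_U; lra. }
  exists (Rmin d0 (e/2)). split; [apply Rmin_pos; lra|].
  intros x r Hx Hr. pose proof (Rmin_l d0 (e/2)). pose proof (Rmin_r d0 (e/2)).
  split; [apply Hd0; lra | lra].
Qed.

Lemma energy_integrable T c1 c2 : 0 < T <= T0 -> 0 < c1 <= c2 -> c2 <= T ->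
  ex_RInt (ed T) c1 c2.
Proof.
  intros HT Hc Hc2. apply (@ex_RInt_continuous R_CompleteNormedModule). intros z Hz.
  rewrite Rmin_left, Rmax_right in Hz by lra.
  apply continuity_2d_pt_snd, energy_cont; [apply cone_in_U|]; lra.
Qed.


Lemma energy_Derive_t_cont t r : U t r -> r <> 0 ->
  continuity_2d_pt (fun x y => Derive (fun z => ed z y) x) t r.
Proof.
  intros Hu Hr. apply continuity_2d_pt_ext_loc with (f := et); [|now apply energy_t_cont].
  destruct (HO t r Hu) as [e [ep He]].
  assert (hp : 0 < Rmin e (Rabs r)) by (apply Rmin_pos; [lra | now apply Rabs_pos_lt]).
  exists (mkposreal _ hp). simpl. intros x y Hx Hy.
  pose proof (Rmin_l e (Rabs r)). pose proof (Rmin_r e (Rabs r)).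
  assert (Hy0 : y <> 0).
  { intros ->. rewrite Rminus_0_l, Rabs_Ropp in Hy. lra. }
  symmetry. apply is_derive_unique, energy_deriv_t; [apply He; lra | exact Hy0].
Qed.

Lemma truncated_energy_deriv_param e tau : 0 < e < tau -> tau <= T0 ->
  is_derive (fun x => RInt (fun r => ed x r) e x) tau
    (RInt (fun r => Derive (fun z => ed z r) tau) e tau + ed tau tau).
Proof.
  intros He Ht.
  destruct (strip_around_segment e tau He Ht) as [d [dp HU]].
  assert (Hex : forall y c1 c2, Rabs (y - tau) < d -> e - d < c1 -> c2 < tau + d -> c1 <= c2 ->
     ex_RInt (fun r => ed y r) c1 c2).
  { intros y c1 c2 Hy Hc1 Hc2 Hc. apply (@ex_RInt_continuous R_CompleteNormedModule). intros z Hz.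
    rewrite Rmin_left, Rmax_right in Hz by lra. destruct (HU y z Hy ltac:(lra)).
    now apply continuity_2d_pt_snd, energy_cont. }
  assert (HD : forall x r, Rabs (x - tau) < d -> e - d < r < tau + d ->
     continuity_2d_pt (fun x' y => Derive (fun z => ed z y) x') x r).
  { intros x r Hx Hr. destruct (HU x r Hx Hr). now apply energy_Derive_t_cont. }
  assert (H0 : Rabs (tau - tau) < d) by (rewrite Rminus_diag, Rabs_R0; lra).
  set (dh := mkposreal (d/2) ltac:(lra)).
  replace (RInt (fun r => Derive (fun z => ed z r) tau) e tau + ed tau tau)
    with (RInt (fun r => Derive (fun z => ed z r) tau) e tau + - ed tau e * 0 + ed tau tau * 1)
    by ring.
  apply (is_derive_RInt_param_bound_comp ed (fun _ => e) (fun x => x)); simpl.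
  - exists (mkposreal d dp). intros y Hy. apply Hex; simpl in *; [exact Hy | lra..].
  - exists dh, (mkposreal d dp). intros y Hy. apply Hex; simpl in *; [exact Hy | lra..].
  - exists dh, (mkposreal d dp). intros y Hy. apply Hex; simpl in *; [exact Hy | lra..].
  - apply is_derive_Reals, derivable_pt_lim_const.
  - apply is_derive_Reals, derivable_pt_lim_id.
  - exists dh, (mkposreal d dp). intros y Hy r Hr. simpl in *.
    rewrite Rmin_left, Rmax_right in Hr by lra. destruct (HU y r Hy ltac:(lra)).
    eexists. now apply energy_deriv_t.
  - intros r Hr. rewrite Rmin_left, Rmax_right in Hr by lra. apply HD; [exact H0 | lra].
  - exists dh. intros x' r Hx Hr. simpl in *. apply Rabs_lt_between' in Hr. apply HD; lra.
  - exists dh. intros x' r Hx Hr. simpl in *. apply Rabs_lt_between' in Hr. apply HD; lra.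
  - destruct (HU tau e H0 ltac:(lra)).
    now apply continuity_pt_of_continuous, continuity_2d_pt_snd, energy_cont.
  - destruct (HU tau tau H0 ltac:(lra)).
    now apply continuity_pt_of_continuous, continuity_2d_pt_snd, energy_cont.
Qed.

Lemma truncated_energy_deriv e tau : 0 < e < tau -> tau <= T0 ->
  is_derive (fun x => RInt (fun r => ed x r) e x) tau (flux tau tau - flux tau e + ed tau tau).
Proof.
  intros He Ht.
  assert (Hcone : forall r, e <= r <= tau -> U tau r /\ in_Omega T0 tau r)
    by (intros r Hr; split; [apply cone_in_U | split]; lra).
  assert (Eint : RInt (fun r => Derive (fun z => ed z r) tau) e tau = RInt (flux_r tau) e tau).
  { apply RInt_ext. intros x Hx. rewrite Rmin_left, Rmax_right in Hx by lra.
    destruct (Hcone x ltac:(lra)) as [Hu Ho].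
    rewrite <- conservation_law by (auto; lra).
    apply is_derive_unique, energy_deriv_t; auto; lra. }
  assert (Eftc : RInt (flux_r tau) e tau = flux tau tau - flux tau e).
  { apply is_RInt_unique, (@is_RInt_derive R_CompleteNormedModule (flux tau));
      intros x Hx; rewrite Rmin_left, Rmax_right in Hx by lra; destruct (Hcone x Hx) as [Hu Ho].
    - apply flux_deriv_r; auto; lra.
    - apply continuity_2d_pt_snd, flux_r_cont; auto; lra. }
  rewrite <- Eftc, <- Eint. now apply truncated_energy_deriv_param.
Qed.

Lemma truncated_energy_monotone e T M : 0 < e < T -> T <= T0 ->
  (forall x y, T <= x <= T0 -> 0 <= y <= T -> Rabs (ut x y) <= M /\ Rabs (ur x y) <= M) ->
  RInt (ed T) e T <= RInt (ed T0) e T0 + (T0 - T) * (e*(1+a*a*M*M)*M*M).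
Proof.
  intros He HT HM.
  set (E := fun x => RInt (fun r => ed x r) e x).
  set (D := fun x => flux x x - flux x e + ed x x).
  destruct (MVT_gen E T T0 D) as [c [Hc Heq']].
  - intros x Hx. rewrite Rmin_left, Rmax_right in Hx by lra. apply truncated_energy_deriv; lra.
  - intros x Hx. rewrite Rmin_left, Rmax_right in Hx by lra. apply continuity_pt_of_continuous.
    apply (@ex_derive_continuous R_AbsRing R_NormedModule). eexists.
    apply truncated_energy_deriv; lra.
  - rewrite Rmin_left, Rmax_right in Hc by lra.
    assert (Hcone := flux_plus_energy_nonneg a u ut ur c ltac:(lra)).
    assert (Haxis : Rabs (flux c e) <= e*(1+a*a*M*M)*M*M).
    { apply flux_small_near_axis; try lra.
      - intros y Hy. apply (HM c y); lra.
      - apply (HM c e); lra. }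
    assert (D c >= - (e*(1+a*a*M*M)*M*M)).
    { unfold D. pose proof (Rle_abs (flux c e)). fold flux ed in Hcone. lra. }
    change (RInt (ed T) e T) with (E T). change (RInt (ed T0) e T0) with (E T0). nra.
Qed.

Lemma sin_sq_radial_growth T e r : 0 < T <= T0 -> 0 < e < r -> r <= T ->
  sin (u T r)*sin (u T r) <= sin (u T e)*sin (u T e) + r*(2/(a*a))*RInt (ed T) e r + r/2.
Proof.
  intros HT He Hr.
  destruct (strip_around_segment e T ltac:(lra) ltac:(lra)) as [d [dp HU]].
  assert (HUT : forall x, e - d < x < T + d -> U T x /\ x <> 0)
    by (intros x Hx; apply HU; [rewrite Rminus_diag, Rabs_R0 | ]; lra).
  assert (Hced : forall x, e - d < x < T + d -> continuity_pt (ed T) x)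
    by (intros x Hx; destruct (HUT x Hx);
        now apply continuity_pt_of_continuous, continuity_2d_pt_snd, energy_cont).
  (* [W] has nonnegative derivative on [[e, r]] by [sin_sq_deriv_le_energy] *)
  set (W := fun x => r*(2/(a*a))*RInt (ed T) e x + x*x/(2*r) - sin (u T x)*sin (u T x)).
  set (W' := fun x => r*(2/(a*a))*ed T x + x/r - 2*sin (u T x)*cos (u T x)*ur T x).
  assert (HW : forall x, e <= x <= r -> is_derive W x (W' x)).
  { intros x Hx. destruct (HUT x ltac:(lra)) as [Hu Hx0].
    pose proof (is_derive_dr _ _ _ T x Dur Hu) as DU.
    unfold W, W'. auto_derive.
    - repeat split; first
        [ apply energy_integrable; lra | eexists; exact DU | apply Hced; lra
        | exists (mkposreal d dp); intros y Hy; apply Hced;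
          apply Rabs_lt_between' in Hy; simpl in Hy; lra ].
    - rewrite (is_derive_unique (fun z : R => u T z) _ _ DU). field. lra. }
  destruct (MVT_gen W e r W') as [c [Hc Hmvt]].
  - intros x Hx. rewrite Rmin_left, Rmax_right in Hx by lra. apply HW. lra.
  - intros x Hx. rewrite Rmin_left, Rmax_right in Hx by lra. apply continuity_pt_of_continuous.
    apply (@ex_derive_continuous R_AbsRing R_NormedModule). eexists. apply HW. lra.
  - rewrite Rmin_left, Rmax_right in Hc by lra.
    pose proof (sin_sq_deriv_le_energy a u ut ur T c r Ha ltac:(lra) ltac:(lra)).
    assert (HWer : W e <= W r) by (fold ed in H; unfold W' in Hmvt; nra).
    unfold W in HWer. rewrite RInt_point in HWer. unfold zero in HWer; simpl in HWer.
    assert (r * r / (2 * r) = r/2) by (field; lra).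
    assert (0 <= e*e/(2*r)) by (apply Rmult_le_pos; [apply Rle_0_sqr | left; apply Rinv_0_lt_compat; lra]).
    lra.
Qed.

Lemma derivatives_bounded x1 x2 y1 y2 : x1 <= x2 -> y1 <= y2 ->
  (forall x y, x1 <= x <= x2 -> y1 <= y <= y2 -> U x y) ->
  exists M, 0 <= M /\ forall x y, x1 <= x <= x2 -> y1 <= y <= y2 ->
    Rabs (ut x y) <= M /\ Rabs (ur x y) <= M.
Proof.
  intros hx hy HU.
  destruct (rectangle_bound ut x1 x2 y1 y2 hx hy) as [M1 HM1].
  { intros x y Hx Hy. apply (cont2_on_pt U); auto. }
  destruct (rectangle_bound ur x1 x2 y1 y2 hx hy) as [M2 HM2].
  { intros x y Hx Hy. apply (cont2_on_pt U); auto. }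
  exists (Rmax 0 (Rmax M1 M2)). split; [apply Rmax_l|].
  intros x y Hx Hy. pose proof (Rmax_l 0 (Rmax M1 M2)). pose proof (Rmax_r 0 (Rmax M1 M2)).
  pose proof (Rmax_l M1 M2). pose proof (Rmax_r M1 M2).
  split; [apply (Rle_trans _ M1) | apply (Rle_trans _ M2)]; auto; lra.
Qed.

(* On a fixed time slice the energy density is bounded (near the axis thanks to [u(t,0) = 0]). *)
Lemma energy_bounded_on_slice tau : 0 < tau <= T0 ->
  exists C, forall x, 0 < x <= tau -> ed tau x <= C.
Proof.
  intros Ht.
  destruct (derivatives_bounded tau tau 0 tau ltac:(lra) ltac:(lra)) as [M [HM HB]].
  { intros x y Hx Hy. apply cone_in_U; lra. }
  exists (tau*(1+a*a*M*M)*M*M + M*M*tau/2). intros x Hx.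
  destruct (HB tau x ltac:(lra) ltac:(lra)) as [h1 h2].
  assert (Hs : Rabs (sin (u tau x)) <= M * x)
    by (apply sin_u_le_linear; [lra | lra | intros y Hy; apply (HB tau y); lra]).
  destruct (sq_div_bound (sin (u tau x)) M x ltac:(lra) Hs) as [q0 q1].
  unfold ed, skyrme_energy. set (s := sin (u tau x)) in *.
  assert (Haa : 0 <= a*a) by apply Rle_0_sqr.
  assert (Hp : ut tau x * ut tau x <= M*M)
    by (replace (ut tau x * ut tau x) with (Rabs (ut tau x) * Rabs (ut tau x))
          by (pose proof (Rsqr_abs (ut tau x)); unfold Rsqr in *; lra);
        apply Rmult_le_compat; auto using Rabs_pos).
  assert (Hq : ur tau x * ur tau x <= M*M)
    by (replace (ur tau x * ur tau x) with (Rabs (ur tau x) * Rabs (ur tau x))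
          by (pose proof (Rsqr_abs (ur tau x)); unfold Rsqr in *; lra);
        apply Rmult_le_compat; auto using Rabs_pos).
  pose proof (Rle_0_sqr (ut tau x)). pose proof (Rle_0_sqr (ur tau x)). unfold Rsqr in *.
  set (P := x + a*a*s*s*/x).
  replace (a*a*s*s*/x) with ((a*a)*(s*s*/x)) in P by ring.
  assert (M*M*x <= M*M*tau) by (apply Rmult_le_compat_l; [apply Rle_0_sqr | lra]).
  assert (HP0 : 0 <= P) by (unfold P; nra).
  assert (HP1 : P <= tau*(1+a*a*M*M)) by (unfold P; nra).
  assert (P*(ut tau x * ut tau x + ur tau x * ur tau x) <= tau*(1+a*a*M*M)*(2*(M*M)))
    by (apply Rmult_le_compat; lra).
  replace (s*s*/2*/x) with ((s*s*/x)/2) by (field; lra).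
  lra.
Qed.

Lemma energy_RInt_le_cone T e r : 0 < T <= T0 -> 0 < e <= r -> r <= T ->
  RInt (ed T) e r <= RInt (ed T) e T.
Proof.
  intros HT He Hr.
  rewrite <- (RInt_Chasles (V := R_CompleteNormedModule) (ed T) e r T)
    by (apply energy_integrable; lra).
  assert (0 <= RInt (ed T) r T); [|unfold plus; simpl; lra].
  apply RInt_ge_0; [lra | apply energy_integrable; lra |].
  intros x Hx. apply skyrme_energy_nonneg. lra.
Qed.

(* Main estimate: the energy bound of the cone forces [sin^2 u(T, r) <= K r] uniformly in
   [0 < r <= T <= T0]; the radius [e] of the excised axis is sent to [0] at the end. *)
Lemma sin_sq_le_linear : exists K, forall T r, 0 < T <= T0 -> 0 < r <= T ->
  sin (u T r) * sin (u T r) <= K * r.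
Proof.
  destruct (energy_bounded_on_slice T0 ltac:(lra)) as [C HC].
  assert (HC0 : 0 <= C)
    by (apply (Rle_trans _ (ed T0 T0)); [apply skyrme_energy_nonneg | apply HC]; lra).
  set (k := 2/(a*a)). assert (Hk : 0 < k) by (apply Rdiv_lt_0_compat; nra).
  exists (k*(C*T0) + 1/2). intros T r HT Hr.
  destruct (derivatives_bounded T T0 0 T ltac:(lra) ltac:(lra)) as [M [HM HB]].
  { intros x y Hx Hy. apply cone_in_U; lra. }
  assert (HF : 0 <= (1+a*a*M*M)*M*M)
    by (pose proof (Rle_0_sqr (a*M)); pose proof (Rle_0_sqr M); unfold Rsqr in *; nra).
  apply (le_of_le_plus_small _ _ r (M*M*r + r*k*((T0-T)*((1+a*a*M*M)*M*M)))); [lra | |].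
  { pose proof (Rle_0_sqr M). unfold Rsqr in *.
    assert (0 <= r*k) by nra. assert (0 <= (T0-T)*((1+a*a*M*M)*M*M)) by (apply Rmult_le_pos; lra).
    assert (0 <= r*k*((T0-T)*((1+a*a*M*M)*M*M))) by (apply Rmult_le_pos; lra). nra. }
  intros e He.
  pose proof (sin_sq_radial_growth T e r HT ltac:(lra) ltac:(lra)) as Hgrowth.
  pose proof (energy_RInt_le_cone T e r HT ltac:(lra) ltac:(lra)) as Hcone.
  pose proof (truncated_energy_monotone e T M ltac:(lra) ltac:(lra) HB) as Hmono.
  assert (Htop : RInt (ed T0) e T0 <= C*T0).
  { apply (Rle_trans _ (RInt (fun _ => C) e T0)).
    - apply RInt_le; [lra | apply energy_integrable; lra | apply ex_RInt_const |].
      intros x Hx. apply HC. lra.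
    - rewrite RInt_const. unfold scal; simpl. unfold mult; simpl. nra. }
  assert (Haxis : sin (u T e) * sin (u T e) <= M*M*r*e).
  { assert (Hs : Rabs (sin (u T e)) <= M * e)
      by (apply sin_u_le_linear; [lra | lra | intros y Hy; apply (HB T y); lra]).
    destruct (sq_div_bound (sin (u T e)) M e ltac:(lra) Hs) as [_ Hq].
    replace (sin (u T e) * sin (u T e)) with (sin (u T e) * sin (u T e) * / e * e) by (field; lra).
    apply (Rle_trans _ (M*M*e*e)); [apply Rmult_le_compat_r; lra|].
    apply Rmult_le_compat_r; [lra | apply Rmult_le_compat_l; [apply Rle_0_sqr | lra]]. }
  fold k in Hgrowth.
  assert (Hint : r*k*RInt (ed T) e r <= r*k*(C*T0 + (T0 - T) * (e*(1+a*a*M*M)*M*M))).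
  { apply Rmult_le_compat_l; [apply Rmult_le_pos |]; lra. }
  nra.
Qed.

Lemma energy_density_continuous T x : 0 < T <= T0 -> 0 <= x <= T ->
  continuity_pt (energy_density u T) x.
Proof.
  intros HT Hx. assert (Hu : U T x) by (apply cone_in_U; lra).
  destruct (Req_dec x 0) as [->|hx].
  - apply (continuity_sq_over_r_at_0 (fun r => sin (u T r)) (cos (u T 0) * ur T 0)).
    + rewrite Hbd by exact HT. apply sin_0.
    + apply is_derive_Reals. now apply sin_u_deriv_r.
  - apply continuity_pt_of_continuous.
    apply (continuity_2d_pt_snd (fun t r => sin (u t r) ^ 2 / (2 * r ^ 2) * r)).
    apply (continuity_2d_pt_ext (fun t r => sin (u t r) * sin (u t r) * / (2 * (r * r)) * r));
      [intros; unfold Rdiv; simpl; rewrite !Rmult_1_r; ring|].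
    assert (Hx2 : 2 * (x * x) <> 0) by (pose proof (Rsqr_pos_lt x hx); unfold Rsqr in *; lra).
    pose proof (cont2_on_pt _ _ _ _ Cu Hu). solve_cont2.
Qed.

End RegularSolution.

Lemma smooth_second_order U u ut ur utt urr : open2 U -> smooth_on U u ->
  dt_on U u ut -> dr_on U u ur -> dt_on U ut utt -> dr_on U ur urr ->
  cont2_on U u /\ cont2_on U ut /\ cont2_on U ur /\ cont2_on U utt /\ cont2_on U urr /\
  exists utr urt, dr_on U ut utr /\ dt_on U ur urt /\ cont2_on U utr /\ cont2_on U urt.
Proof.
  intros HO Hs Dut Dur Dutt Durr.
  destruct (Hs 3%nat) as [Cu [ft [fr [Dft [Dfr [[Cft [ftt [ftr [Dftt [Dftr [[Cftt _] [Cftr _]]]]]]]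
    [Cfr [frt [frr [Dfrt [Dfrr [[Cfrt _] [Cfrr _]]]]]]]]]]]]].
  assert (Eut : forall t r, U t r -> ft t r = ut t r)
    by (intros t r Hu; exact (uniqueness_limite _ _ _ _ (Dft t r Hu) (Dut t r Hu))).
  assert (Eur : forall t r, U t r -> fr t r = ur t r)
    by (intros t r Hu; exact (uniqueness_limite _ _ _ _ (Dfr t r Hu) (Dur t r Hu))).
  assert (Dftt' : dt_on U ut ftt) by exact (dt_on_ext U ft ut ftt HO Eut Dftt).
  assert (Dfrr' : dr_on U ur frr) by exact (dr_on_ext U fr ur frr HO Eur Dfrr).
  assert (Eutt : forall t r, U t r -> ftt t r = utt t r)
    by (intros t r Hu; exact (uniqueness_limite _ _ _ _ (Dftt' t r Hu) (Dutt t r Hu))).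
  assert (Eurr : forall t r, U t r -> frr t r = urr t r)
    by (intros t r Hu; exact (uniqueness_limite _ _ _ _ (Dfrr' t r Hu) (Durr t r Hu))).
  repeat split; [exact Cu | apply (cont2_on_ext U ft) | apply (cont2_on_ext U fr)
    | apply (cont2_on_ext U ftt) | apply (cont2_on_ext U frr) | ]; auto.
  exists ftr, frt. repeat split; auto.
  - exact (dr_on_ext U ft ut ftr HO Eut Dftr).
  - exact (dt_on_ext U fr ur frt HO Eur Dfrt).
Qed.

Theorem corollary1 (alpha T0 : R) (u ut ur utt urr : R -> R -> R)
  (U : R -> R -> Prop) :
  0 < alpha -> 0 < T0 ->
  (* u is smooth on an open neighbourhood U of Omega *)
  open2 U -> (forall t r, in_Omega T0 t r -> U t r) -> smooth_on U u ->
  dt_on U u ut -> dr_on U u ur -> dt_on U ut utt -> dr_on U ur urr ->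
  (* u solves the equation in Omega for r > 0 *)
  (forall t r, in_Omega T0 t r -> 0 < r -> skyrme_eq alpha u ut ur utt urr t r) ->
  (* boundary condition u(t,0) = 0 *)
  (forall t, 0 < t <= T0 -> u t 0 = 0) ->
  (forall T, 0 < T <= T0 -> inhabited (Riemann_integrable (energy_density u T) 0 T)) /\
  (forall eps, 0 < eps -> exists delta, 0 < delta /\
     forall T (pr : Riemann_integrable (energy_density u T) 0 T),
       0 < T -> T < delta -> T <= T0 -> Rabs (RiemannInt pr) < eps).
Proof.
  intros ha hT0 HO HOm Hs Dut Dur Dutt Durr Heq Hbd.
  destruct (smooth_second_order U u ut ur utt urr HO Hs Dut Dur Dutt Durr)
    as (Cu & Cut & Cur & Cutt & Curr & utr & urt & Dutr & Durt & Cutr & Curt).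
  split.
  - intros T HT. constructor. apply continuity_implies_RiemannInt; [lra|].
    intros x Hx. eapply energy_density_continuous; eauto.
  - (* [sin^2 u <= K r] bounds the integrand by [K/2], so the integral is at most [K T / 2] *)
    destruct (sin_sq_le_linear alpha T0 u ut ur utt utr urt urr U) as [K HK]; auto.
    assert (HK1 : 0 < Rabs K + 1) by (pose proof (Rabs_pos K); lra).
    intros eps heps. exists (eps / (Rabs K + 1)). split; [apply Rdiv_lt_0_compat; lra|].
    intros T pr HT HTd HT0.
    assert (Hbound : forall x, 0 < x < T -> 0 <= energy_density u T x <= K/2).
    { intros x Hx. specialize (HK T x ltac:(lra) ltac:(lra)). unfold energy_density.
      replace (sin (u T x) ^ 2 / (2 * x ^ 2) * x) with (sin (u T x) * sin (u T x) / (2*x))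
        by (field; lra).
      split; [apply Rmult_le_pos; [apply Rle_0_sqr | left; apply Rinv_0_lt_compat; lra]|].
      apply (Rmult_le_reg_r (2*x)); [lra|]. unfold Rdiv. rewrite Rmult_assoc, Rinv_l by lra. lra. }
    destruct (RiemannInt_bounded _ T (K/2) pr ltac:(lra) Hbound) as [I0 I1].
    assert (T * (Rabs K + 1) < eps).
    { apply (Rmult_lt_compat_r (Rabs K + 1)) in HTd; [|lra].
      unfold Rdiv in HTd. rewrite Rmult_assoc, Rinv_l in HTd by lra. lra. }
    pose proof (Rle_abs K). rewrite Rabs_right by lra. nra.
Qed.
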